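(* Let $G$ be a finite group and let $S$ be a set of non-identity arrows of $G$. Let $(K,H)$ be a non-identity arrow (so $K< H\leqslant G$). If $(K,H)\in\langle S\rangle$, then there exist an arrow $(K',H')\in S$ and an element $g\in G$ such that $K\leqslant gK'g^{-1}$ and $H\leqslant gH'g^{-1}$.
   Context: For a finite group $G$, an arrow is a pair $(K,H)$ of subgroups with $K\leqslant H$; it is an identity arrow if $K=H$. A $G$-transfer system is a set $\mathsf{T}$ of arrows containing all identity arrows and closed under composition ($(A,B),(B,C)\in\mathsf{T}\Rightarrow(A,C)\in\mathsf{T}$), conjugation ($(A,B)\in\mathsf{T}\Rightarrow(gAg^{-1},gBg^{-1})\in\mathsf{T}$ for all $g\in G$) and restriction ($(A,B)\in\mathsf{T}$, $L\leqslant B\Rightarrow(A\cap L,L)\in\mathsf{T}$). For a set $S$ of arrows, $\langle S\rangle$ denotes the smallest $G$-transfer system containing $S$. *)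

From mathcomp Require Import all_boot all_fingroup.
Set Implicit Arguments. Unset Strict Implicit. Unset Printing Implicit Defensive.
Local Open Scope group_scope.

(* An arrow of G (here G = [set: gT], the whole finite group) is a pair (K, H)
   of subgroups with K \subset H. *)
Definition arrow (gT : finGroupType) := ({group gT} * {group gT})%type.

Definition is_arrow (gT : finGroupType) (a : arrow gT) : Prop := a.1 \subset a.2.

Definition arrow_set (gT : finGroupType) := arrow gT -> Prop.

Definition is_transfer_system (gT : finGroupType) (T : arrow_set gT) : Prop :=
  (forall a, T a -> is_arrow a) /\
  (forall H : {group gT}, T (H, H)) /\
  (forall A B C : {group gT}, T (A, B) -> T (B, C) -> T (A, C)) /\
  (forall (A B : {group gT}) (g : gT), T (A, B) -> T ((A :^ g)%G, (B :^ g)%G)) /\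
  (forall A B L : {group gT}, T (A, B) -> L \subset B -> T ((A :&: L)%G, L)).

Definition gen_transfer (gT : finGroupType) (S : arrow_set gT) : arrow_set gT :=
  fun a => forall T : arrow_set gT, is_transfer_system T ->
             (forall b, S b -> T b) -> T a.

From mathcomp Require Import all_boot all_fingroup.
Set Implicit Arguments. Unset Strict Implicit. Unset Printing Implicit Defensive.
Local Open Scope group_scope.

(* The arrows that are identities or lie below a conjugate of an arrow of S
   form a transfer system: composition, conjugation and restriction only
   shrink or conjugate both ends of an arrow. This transfer system contains S,
   hence also <S>, so a non-identity arrow of <S> lies below a conjugate of an
   arrow of S. *)

Section SubconjugateArrows.

Variable gT : finGroupType.
Implicit Types (A B C L : {group gT}) (a b : arrow gT) (S : arrow_set gT).

Definition subconj_arrow a b : Prop :=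
  exists g : gT, a.1 \subset b.1 :^ g /\ a.2 \subset b.2 :^ g.

Lemma subconj_arrow_refl b : subconj_arrow b b.
Proof. by exists 1; rewrite !conjsg1. Qed.

Lemma subconj_arrow_comp A B C b :
  A \subset B -> subconj_arrow (B, C) b -> subconj_arrow (A, C) b.
Proof.
by move=> sAB [g [sB sC]]; exists g; split=> //; apply: subset_trans sB.
Qed.

Lemma subconj_arrow_conj A B h b :
  subconj_arrow (A, B) b -> subconj_arrow ((A :^ h)%G, (B :^ h)%G) b.
Proof. by move=> [g [sA sB]]; exists (g * h); rewrite /= !conjsgM !conjSg. Qed.

Lemma subconj_arrow_restr A B L b :
  L \subset B -> subconj_arrow (A, B) b -> subconj_arrow ((A :&: L)%G, L) b.
Proof.
move=> sLB [g [sA sB]]; exists g; split; last exact: subset_trans sB.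
exact: subset_trans (subsetIl _ _) sA.
Qed.

Definition id_or_subconj S : arrow_set gT :=
  fun a => is_arrow a /\ (a.1 :=: a.2 \/ exists2 b, S b & subconj_arrow a b).

Lemma id_or_subconj_transfer S : is_transfer_system (id_or_subconj S).
Proof.
split; first by move=> a [].
split; first by move=> A; split; [exact: subxx | left].
split.
  move=> A B C [/= sAB hAB] [/= sBC [eBC | [b Sb sBCb]]].
    by move/val_inj: eBC => eBC; subst C.
  split; first exact: subset_trans sBC.
  by right; exists b; last exact: subconj_arrow_comp sBCb.
split.
  move=> A B h [/= sAB [eAB | [b Sb sABb]]];
    split; rewrite /is_arrow /= ?conjSg //.
    by left; rewrite eAB.
  by right; exists b; last exact: subconj_arrow_conj.
move=> A B L [_ [eAB | [b Sb sABb]]] sLB.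
  by split; [exact: subsetIr | left; rewrite /= eAB; apply/setIidPr].
split; first exact: subsetIr.
by right; exists b; last exact: subconj_arrow_restr sABb.
Qed.

Lemma gen_transfer_id_or_subconj S a :
  (forall b, S b -> is_arrow b) -> gen_transfer S a -> id_or_subconj S a.
Proof.
move=> S_arrows; apply; first exact: id_or_subconj_transfer.
move=> b Sb; split; first exact: S_arrows.
by right; exists b; last exact: subconj_arrow_refl.
Qed.

End SubconjugateArrows.

Theorem lemma2p9 (gT : finGroupType) (S : arrow_set gT)
  (HS_arrows : forall a, S a -> is_arrow a)
  (HS_nonid : forall a, S a -> a.1 != a.2)
  (K H : {group gT}) (HKH : K \proper H) :
  gen_transfer S (K, H) ->
  exists K' H' : {group gT}, exists g : gT,
    S (K', H') /\ K \subset K' :^ g^-1 /\ H \subset H' :^ g^-1.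
Proof.
move=> /(gen_transfer_id_or_subconj HS_arrows) [_ [/= eKH | [[K' H'] SKH' [g sKH]]]].
  by move: HKH; rewrite eKH properxx.
by exists K', H', g^-1; rewrite invgK.
Qed.
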